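(* (AdS shift.) Consider the single-fluid shifted system with $\sigma<0$, and let $t_{\mathrm b},\xi_{\mathrm b},\xi_0,t_0$ be as in the time-interval setup and $b:=\max_{t\in[t_{\mathrm b},t_0]}\sqrt2\,|y_{\mathrm i}(t)|h(t)/l>0$. Then $$\Delta t_{\mathrm b0}\ \ge\ \frac{1}{2\sqrt{2\xi_0}}\,\frac{1}{b\,c\,l}\,\frac{\xi_0-\xi_{\mathrm b}}{\sqrt{1+|\sigma|/h(t_0)^2}}.$$
   Context: Shifted single-fluid system. Fix real constants $c>0$, $l>0$, $w\in[-1,1]$ and $\sigma\in\mathbb{R}$. Let $I\subseteq\mathbb R$ be an interval and $x,y_{\mathrm r},y_{\mathrm i},z,h$ real $C^1$ functions on $I$ with $h>0$, $z\ge0$. Define $\xi=x^2+\frac{1+w}{2}z^2$. Assume on $I$: $\dot x=[-x+4c\,y_{\mathrm r}y_{\mathrm i}+x\xi]h$, $\dot y_{\mathrm r}=[\xi y_{\mathrm r}-c\,x\,y_{\mathrm i}]h$, $\dot y_{\mathrm i}=[\xi y_{\mathrm i}+c\,x\,y_{\mathrm r}]h$, $\dot z=[-\frac{1+w}{2}+\xi]zh$, $\dot h=-\xi h^2$, with constraints $x^2+4y_{\mathrm r}^2+z^2=1-\sigma/h^2$ and $y_{\mathrm r}^2+y_{\mathrm i}^2=\frac{l^2}{2h^2}$. (Here $\sigma=L^2$ encodes a cosmological constant $\Lambda$ added to the cosine potential, of the sign of $\Lambda$.) Time-interval setup: let $t_{\mathrm b}\in I$, $\xi_{\mathrm b}:=\xi(t_{\mathrm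 b})$, and let $\xi_0$ be a real number with $\xi_0>0$ and $\xi_{\mathrm b}\le\xi_0\le\frac{1+w}{2}$. Assume the set $\{t\in I:\ t\ge t_{\mathrm b},\ \xi(t)=\xi_0\}$ is nonempty and let $t_0$ be its minimum (so $\xi(t)\le\xi_0$ for all $t\in[t_{\mathrm b},t_0]$); put $\Delta t_{\mathrm b0}=t_0-t_{\mathrm b}$. *)

From Stdlib Require Import Reals.
Open Scope R_scope.

Definition is_interval (I : R -> Prop) : Prop :=
  forall a b t, I a -> I b -> a <= t <= b -> I t.

Definition has_deriv_on (I : R -> Prop) (f f' : R -> R) : Prop :=
  forall t, I t ->
    forall eps, 0 < eps -> exists delta, 0 < delta /\
      forall s, I s -> Rabs (s - t) < delta ->
        Rabs (f s - f t - f' t * (s - t)) <= eps * Rabs (s - t).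

Definition continuous_on_I (I : R -> Prop) (g : R -> R) : Prop :=
  forall t, I t ->
    forall eps, 0 < eps -> exists delta, 0 < delta /\
      forall s, I s -> Rabs (s - t) < delta -> Rabs (g s - g t) < eps.

Definition C1_on (I : R -> Prop) (f f' : R -> R) : Prop :=
  has_deriv_on I f f' /\ continuous_on_I I f'.

From Stdlib Require Import Reals Lra Psatz.
From Coquelicot Require Import Coquelicot.
Open Scope R_scope.

(* Write k = (1 + w) / 2.  Along the flow
     xi' = 2 h (xi^2 - x^2 - k^2 z^2) + 8 c x y_r y_i h,
   and as long as xi <= xi0 <= k the first term is dissipative, so xi can only grow
   through the coupling term.  Before t0 we have xi <= xi0, hence |x| <= sqrt xi0;
   h is decreasing, so the first constraint gives 2 |y_r| <= sqrt (1 + |sigma| / h(t0)^2);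
   and sqrt 2 |y_i| h <= b l by definition of b.  Thus xi' is bounded by
   2 sqrt (2 xi0) b c l sqrt (1 + |sigma| / h(t0)^2) on [t_b, t0], and the mean value
   theorem turns this rate bound into the lower bound on t0 - t_b. *)

Lemma has_deriv_on_continuous_on_I I f f' :
  has_deriv_on I f f' -> continuous_on_I I f.
Proof.
  intros Hd t It eps Heps.
  destruct (Hd t It 1 ltac:(lra)) as [d0 [Hd0 Hs]].
  set (C := Rabs (f' t) + 2).
  assert (HC : 0 < C) by (unfold C; pose proof (Rabs_pos (f' t)); lra).
  exists (Rmin d0 (eps / C)). split.
  { apply Rmin_pos; [lra | apply Rdiv_lt_0_compat; lra]. }
  intros s Is Hst.
  assert (Hs0 : Rabs (s - t) < d0) by (eapply Rlt_le_trans; [exact Hst | apply Rmin_l]).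
  assert (Hse : Rabs (s - t) * C < eps).
  { apply (Rlt_le_trans _ (eps / C * C)); [| unfold Rdiv; rewrite Rmult_assoc, Rinv_l; lra].
    apply Rmult_lt_compat_r; [lra |]. eapply Rlt_le_trans; [exact Hst | apply Rmin_r]. }
  specialize (Hs s Is Hs0).
  replace (f s - f t) with ((f s - f t - f' t * (s - t)) + f' t * (s - t)) by ring.
  eapply Rle_lt_trans; [apply Rabs_triang |]. rewrite Rabs_mult.
  unfold C in Hse. pose proof (Rabs_pos (f' t)). pose proof (Rabs_pos (s - t)). nra.
Qed.

Lemma has_deriv_on_ext I f g f' g' :
  (forall t, I t -> f t = g t) -> (forall t, I t -> f' t = g' t) ->
  has_deriv_on I f f' -> has_deriv_on I g g'.
Proof.
  intros Efg Efg' Hd t It eps Heps.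
  destruct (Hd t It eps Heps) as [d [Hd0 Hs]].
  exists d. split; [exact Hd0 |]. intros s Is Hst.
  rewrite <- (Efg s Is), <- (Efg t It), <- (Efg' t It). exact (Hs s Is Hst).
Qed.

Lemma has_deriv_on_plus I f g f' g' :
  has_deriv_on I f f' -> has_deriv_on I g g' ->
  has_deriv_on I (fun t => f t + g t) (fun t => f' t + g' t).
Proof.
  intros Hf Hg t It eps Heps.
  destruct (Hf t It (eps / 2) ltac:(lra)) as [d1 [Hd1 Hs1]].
  destruct (Hg t It (eps / 2) ltac:(lra)) as [d2 [Hd2 Hs2]].
  exists (Rmin d1 d2). split; [now apply Rmin_pos |]. intros s Is Hst.
  specialize (Hs1 s Is (Rlt_le_trans _ _ _ Hst (Rmin_l _ _))).
  specialize (Hs2 s Is (Rlt_le_trans _ _ _ Hst (Rmin_r _ _))).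
  replace (f s + g s - (f t + g t) - (f' t + g' t) * (s - t))
    with ((f s - f t - f' t * (s - t)) + (g s - g t - g' t * (s - t))) by ring.
  eapply Rle_trans; [apply Rabs_triang | lra].
Qed.

Lemma has_deriv_on_scal I k f f' :
  has_deriv_on I f f' -> has_deriv_on I (fun t => k * f t) (fun t => k * f' t).
Proof.
  intros Hf t It eps Heps.
  set (K := Rabs k + 1).
  assert (HK : 0 < K) by (unfold K; pose proof (Rabs_pos k); lra).
  destruct (Hf t It (eps / K) ltac:(apply Rdiv_lt_0_compat; lra)) as [d [Hd Hs]].
  exists d. split; [exact Hd |]. intros s Is Hst. specialize (Hs s Is Hst).
  replace (k * f s - k * f t - k * f' t * (s - t))
    with (k * (f s - f t - f' t * (s - t))) by ring.
  rewrite Rabs_mult.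
  assert (Hk : Rabs k <= K) by (unfold K; lra).
  assert (HsK : eps / K * Rabs (s - t) * K = eps * Rabs (s - t)) by (field; lra).
  pose proof (Rabs_pos k). pose proof (Rabs_pos (s - t)).
  pose proof (Rabs_pos (f s - f t - f' t * (s - t))).
  assert (0 <= eps / K) by (apply Rlt_le, Rdiv_lt_0_compat; lra).
  nra.
Qed.

Lemma has_deriv_on_mult I f g f' g' :
  has_deriv_on I f f' -> has_deriv_on I g g' ->
  has_deriv_on I (fun t => f t * g t) (fun t => f' t * g t + f t * g' t).
Proof.
  intros Hf Hg t It eps Heps.
  set (A := Rabs (g t) + 1). set (B := Rabs (f t) + 1). set (C := Rabs (f' t) + 1).
  assert (HA : 0 < A) by (unfold A; pose proof (Rabs_pos (g t)); lra).
  assert (HB : 0 < B) by (unfold B; pose proof (Rabs_pos (f t)); lra).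
  assert (HC : 0 < C) by (unfold C; pose proof (Rabs_pos (f' t)); lra).
  destruct (Hf t It (eps / (3 * A)) ltac:(apply Rdiv_lt_0_compat; lra))
    as [d1 [Hd1 Hs1]].
  destruct (Hg t It (eps / (3 * B)) ltac:(apply Rdiv_lt_0_compat; lra))
    as [d2 [Hd2 Hs2]].
  destruct (has_deriv_on_continuous_on_I I g g' Hg t It (Rmin 1 (eps / (3 * C))))
    as [d3 [Hd3 Hs3]].
  { apply Rmin_pos; [lra | apply Rdiv_lt_0_compat; lra]. }
  exists (Rmin d1 (Rmin d2 d3)). split; [now repeat apply Rmin_pos |].
  intros s Is Hst.
  assert (Hst2 : Rabs (s - t) < Rmin d2 d3) by (eapply Rlt_le_trans; [exact Hst | apply Rmin_r]).
  specialize (Hs1 s Is (Rlt_le_trans _ _ _ Hst (Rmin_l _ _))).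
  specialize (Hs2 s Is (Rlt_le_trans _ _ _ Hst2 (Rmin_l _ _))).
  specialize (Hs3 s Is (Rlt_le_trans _ _ _ Hst2 (Rmin_r _ _))).
  assert (Hg1 : Rabs (g s - g t) <= 1) by (eapply Rlt_le, Rlt_le_trans; [exact Hs3 | apply Rmin_l]).
  assert (Hg3 : Rabs (g s - g t) <= eps / (3 * C))
    by (eapply Rlt_le, Rlt_le_trans; [exact Hs3 | apply Rmin_r]).
  assert (HgA : Rabs (g s) <= A).
  { unfold A. replace (g s) with (g t + (g s - g t)) by ring.
    eapply Rle_trans; [apply Rabs_triang | lra]. }
  set (r := f s - f t - f' t * (s - t)) in Hs1.
  set (q := g s - g t - g' t * (s - t)) in Hs2.
  replace (f s * g s - f t * g t - (f' t * g t + f t * g' t) * (s - t))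
    with (r * g s + f' t * (s - t) * (g s - g t) + f t * q)
    by (unfold r, q; ring).
  assert (E1 : Rabs (r * g s) <= eps / 3 * Rabs (s - t)).
  { rewrite Rabs_mult.
    apply (Rle_trans _ (eps / (3 * A) * Rabs (s - t) * A)).
    - apply Rmult_le_compat; auto using Rabs_pos.
    - right. field. lra. }
  assert (E2 : Rabs (f' t * (s - t) * (g s - g t)) <= eps / 3 * Rabs (s - t)).
  { rewrite !Rabs_mult.
    apply (Rle_trans _ (C * Rabs (s - t) * (eps / (3 * C)))).
    - apply Rmult_le_compat; auto using Rabs_pos.
      + apply Rmult_le_pos; apply Rabs_pos.
      + apply Rmult_le_compat_r; [apply Rabs_pos | unfold C; lra].
    - right. field. lra. }
  assert (E3 : Rabs (f t * q) <= eps / 3 * Rabs (s - t)).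
  { rewrite Rabs_mult.
    apply (Rle_trans _ (B * (eps / (3 * B) * Rabs (s - t)))).
    - apply Rmult_le_compat; auto using Rabs_pos. unfold B; lra.
    - right. field. lra. }
  eapply Rle_trans; [apply Rabs_triang |].
  eapply Rle_trans; [apply Rplus_le_compat_r, Rabs_triang | lra].
Qed.

Lemma has_deriv_on_sqr I f f' :
  has_deriv_on I f f' -> has_deriv_on I (fun t => f t ^ 2) (fun t => 2 * f t * f' t).
Proof.
  intros Hf. apply (has_deriv_on_ext I (fun t => f t * f t) _
                      (fun t => f' t * f t + f t * f' t)).
  - intros t _. ring.
  - intros t _. ring.
  - now apply has_deriv_on_mult.
Qed.

Definition clamp (a b s : R) : R := Rmax a (Rmin b s).

Lemma clamp_id a b s : a <= s <= b -> clamp a b s = s.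
Proof. intros. unfold clamp, Rmax, Rmin. repeat destruct Rle_dec; lra. Qed.

Lemma clamp_in a b s : a <= b -> a <= clamp a b s <= b.
Proof. intros. unfold clamp, Rmax, Rmin. repeat destruct Rle_dec; lra. Qed.

Lemma clamp_lipschitz a b s t : Rabs (clamp a b s - clamp a b t) <= Rabs (s - t).
Proof.
  unfold clamp, Rmax, Rmin. repeat destruct Rle_dec;
    unfold Rabs; repeat destruct Rcase_abs; lra.
Qed.

(* Clamping to [a, b] turns a function known only on the interval I into a function on R,
   to which the mean value and intermediate value theorems of the library apply. *)
Section Clamp.

Variables (I : R -> Prop) (a b : R).
Hypotheses (HI : is_interval I) (Ia : I a) (Ib : I b) (Hab : a <= b).

Lemma I_clamp s : I (clamp a b s).
Proof. apply (HI a b); auto. now apply clamp_in. Qed.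

Lemma continuity_pt_clamp f t :
  continuous_on_I I f -> continuity_pt (fun s => f (clamp a b s)) t.
Proof.
  intros Hf eps Heps.
  destruct (Hf _ (I_clamp t) eps Heps) as [d [Hd Hs]].
  exists d. split; [exact Hd |]. intros s [_ Hst]. simpl in *. unfold R_dist in *.
  apply Hs; [apply I_clamp |]. eapply Rle_lt_trans; [apply clamp_lipschitz | exact Hst].
Qed.

Lemma is_derive_clamp f f' t :
  has_deriv_on I f f' -> a < t < b -> is_derive (fun s => f (clamp a b s)) t (f' t).
Proof.
  intros Hf Ht. apply is_derive_Reals. intros eps Heps.
  assert (It : I t) by (apply (HI a b); auto; lra).
  destruct (Hf t It (eps / 2) ltac:(lra)) as [d [Hd Hs]].
  assert (Hpos : 0 < Rmin d (Rmin (t - a) (b - t))) by (repeat apply Rmin_pos; lra).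
  exists (mkposreal _ Hpos). intros u Hu0 Hu. simpl in Hu.
  assert (Hud : Rabs u < d) by (eapply Rlt_le_trans; [exact Hu | apply Rmin_l]).
  assert (Hin : a < t + u < b).
  { pose proof (Rmin_r d (Rmin (t - a) (b - t))). pose proof (Rmin_l (t - a) (b - t)).
    pose proof (Rmin_r (t - a) (b - t)). unfold Rabs in Hu; destruct Rcase_abs; lra. }
  rewrite !clamp_id by lra.
  assert (Itu : I (t + u)) by (apply (HI a b); auto; lra).
  specialize (Hs (t + u) Itu). replace (t + u - t) with u in Hs by ring.
  specialize (Hs Hud).
  replace ((f (t + u) - f t) / u - f' t) with ((f (t + u) - f t - f' t * u) / u)
    by (field; exact Hu0).
  assert (Hu' : 0 < Rabs u) by (apply Rabs_pos_lt; exact Hu0).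
  unfold Rdiv. rewrite Rabs_mult, Rabs_inv.
  apply (Rmult_lt_reg_r (Rabs u)); [exact Hu' |].
  rewrite Rmult_assoc, Rinv_l by lra. nra.
Qed.

Lemma mean_value_on f f' :
  has_deriv_on I f f' -> exists c, a <= c <= b /\ f b - f a = f' c * (b - a).
Proof.
  intros Hf.
  destruct (MVT_gen (fun s => f (clamp a b s)) a b f') as [c [Hc Hm]].
  - intros t Ht. rewrite Rmin_left, Rmax_right in Ht by exact Hab.
    now apply is_derive_clamp.
  - intros t _. apply continuity_pt_clamp. exact (has_deriv_on_continuous_on_I _ _ _ Hf).
  - rewrite Rmin_left, Rmax_right in Hc by exact Hab.
    exists c. split; [exact Hc |]. now rewrite !clamp_id in Hm by lra.
Qed.

Lemma mean_value_le f f' M :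
  has_deriv_on I f f' -> (forall t, a <= t <= b -> f' t <= M) ->
  f b - f a <= M * (b - a).
Proof.
  intros Hf HM. destruct (mean_value_on f f' Hf) as [c [Hc ->]].
  apply Rmult_le_compat_r; [lra | exact (HM c Hc)].
Qed.

Lemma deriv_nonpos_le f f' :
  has_deriv_on I f f' -> (forall t, a <= t <= b -> f' t <= 0) -> f b <= f a.
Proof.
  intros Hf Hneg. enough (f b - f a <= 0 * (b - a)) by lra.
  exact (mean_value_le f f' 0 Hf Hneg).
Qed.

Lemma intermediate_value_on f y :
  continuous_on_I I f -> f a <= y <= f b -> exists c, a <= c <= b /\ f c = y.
Proof.
  intros Hf Hy.
  destruct (IVT_gen (fun s => f (clamp a b s)) a b y) as [c [Hc Hfc]].
  - intro t. now apply continuity_pt_clamp.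
  - rewrite !clamp_id by lra. rewrite Rmin_left, Rmax_right; lra.
  - rewrite Rmin_left, Rmax_right in Hc by exact Hab.
    exists c. split; [exact Hc |]. now rewrite clamp_id in Hfc.
Qed.

End Clamp.

Lemma le_before_first_hit I f a t0 y :
  is_interval I -> I a -> I t0 -> continuous_on_I I f -> f a <= y ->
  (forall t, I t -> a <= t -> f t = y -> t0 <= t) ->
  forall t, a <= t <= t0 -> f t <= y.
Proof.
  intros HI Ia It0 Hf Hfa Hfirst t Ht.
  destruct (Rle_or_lt (f t) y) as [Hle | Hgt]; [exact Hle | exfalso].
  assert (It : I t) by (apply (HI a t0); auto).
  destruct (intermediate_value_on I a t HI Ia It (proj1 Ht) f y Hf ltac:(lra))
    as [s [Hs Hfs]].
  assert (t0 <= s) by (apply Hfirst; [apply (HI a t); auto | lra | exact Hfs]).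
  assert (s = t) as -> by lra. lra.
Qed.

Lemma Rabs_le_sqrt x a : x ^ 2 <= a -> Rabs x <= sqrt a.
Proof.
  intros H. rewrite <- sqrt_Rsqr_abs. apply sqrt_le_1_alt. unfold Rsqr. lra.
Qed.

Lemma sq_plus_scal_sq_ge0 k X Z : 0 <= k -> 0 <= X ^ 2 + k * Z ^ 2.
Proof. intros Hk. pose proof (pow2_ge_0 X). pose proof (pow2_ge_0 Z). nra. Qed.

Lemma dissipation_le k X Z :
  0 <= k <= 1 -> X ^ 2 + k * Z ^ 2 <= k -> (X ^ 2 + k * Z ^ 2) ^ 2 <= X ^ 2 + k ^ 2 * Z ^ 2.
Proof.
  intros Hk Hxi. pose proof (pow2_ge_0 X). pose proof (pow2_ge_0 Z).
  pose proof (sq_plus_scal_sq_ge0 k X Z (proj1 Hk)).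
  assert ((X ^ 2 + k * Z ^ 2) ^ 2 <= k * (X ^ 2 + k * Z ^ 2)) by nra.
  nra.
Qed.

Lemma four_sq_le_of_constraint sigma h0 X Y Z H :
  sigma < 0 -> 0 < h0 <= H ->
  X ^ 2 + 4 * Y ^ 2 + Z ^ 2 = 1 - sigma / H ^ 2 ->
  4 * Y ^ 2 <= 1 + Rabs sigma / h0 ^ 2.
Proof.
  intros Hs Hh Hcon. rewrite Rabs_left by exact Hs.
  assert (- sigma / H ^ 2 <= - sigma / h0 ^ 2).
  { unfold Rdiv. apply Rmult_le_compat_l; [lra |].
    apply Rinv_le_contravar; [apply pow_lt; lra | apply pow_incr; lra]. }
  pose proof (pow2_ge_0 X). pose proof (pow2_ge_0 Z).
  unfold Rdiv in *. lra.
Qed.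

Lemma shifted_xi_rate_le c k sigma l b xi0 h0 X Y V Z h :
  0 < c -> 0 < l -> 0 <= k <= 1 -> sigma < 0 -> 0 < h0 <= h ->
  X ^ 2 + k * Z ^ 2 <= xi0 -> xi0 <= k ->
  X ^ 2 + 4 * Y ^ 2 + Z ^ 2 = 1 - sigma / h ^ 2 ->
  sqrt 2 * Rabs V * h / l <= b ->
  2 * X * ((- X + 4 * c * Y * V + X * (X ^ 2 + k * Z ^ 2)) * h)
    + k * (2 * Z * ((- k + (X ^ 2 + k * Z ^ 2)) * Z * h))
  <= 2 * sqrt (2 * xi0) * (b * c * l) * sqrt (1 + Rabs sigma / h0 ^ 2).
Proof.
  intros Hc Hl Hk Hs Hh Hxi Hxik Hcon Hb.
  set (S := sqrt (1 + Rabs sigma / h0 ^ 2)).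
  assert (Hsq2 : sqrt 2 * sqrt 2 = 2) by (apply sqrt_sqrt; lra).
  assert (Hsq2pos : 0 < sqrt 2) by (apply sqrt_lt_R0; lra).
  assert (HX : Rabs X <= sqrt xi0).
  { apply Rabs_le_sqrt. pose proof (pow2_ge_0 Z). nra. }
  assert (HY : 2 * Rabs Y <= S).
  { replace (2 * Rabs Y) with (Rabs (2 * Y)) by (rewrite Rabs_mult, Rabs_right; lra).
    apply Rabs_le_sqrt. pose proof (four_sq_le_of_constraint _ _ _ _ _ _ Hs Hh Hcon). lra. }
  assert (HV : sqrt 2 * (Rabs V * h) <= b * l).
  { apply (Rmult_le_compat_r l) in Hb; [| lra].
    replace (sqrt 2 * Rabs V * h / l * l) with (sqrt 2 * (Rabs V * h)) in Hb by (field; lra).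
    exact Hb. }
  assert (Hrate : 2 * X * ((- X + 4 * c * Y * V + X * (X ^ 2 + k * Z ^ 2)) * h)
                  + k * (2 * Z * ((- k + (X ^ 2 + k * Z ^ 2)) * Z * h))
                = 2 * h * ((X ^ 2 + k * Z ^ 2) ^ 2 - (X ^ 2 + k ^ 2 * Z ^ 2))
                  + 8 * c * (X * Y * V * h)) by ring.
  assert (Hdiss := dissipation_le k X Z Hk ltac:(lra)).
  assert (Hcoupling : X * Y * V * h <= Rabs X * Rabs Y * (Rabs V * h)).
  { eapply Rle_trans; [apply Rle_abs |].
    rewrite !Rabs_mult, (Rabs_right h) by lra. lra. }
  assert (Hsqrt : sqrt (2 * xi0) = sqrt 2 * sqrt xi0)
    by (apply sqrt_mult; [lra | pose proof (sq_plus_scal_sq_ge0 k X Z (proj1 Hk)); lra]).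
  (* 8 = 2 * sqrt 2 * 2 * sqrt 2 splits the coupling term along the three bounds above. *)
  assert (Hsplit : 8 * c * (Rabs X * Rabs Y * (Rabs V * h))
                   = 2 * c * sqrt 2 * Rabs X * (2 * Rabs Y) * (sqrt 2 * (Rabs V * h))).
  { replace (2 * c * sqrt 2 * Rabs X * (2 * Rabs Y) * (sqrt 2 * (Rabs V * h)))
      with (4 * c * (sqrt 2 * sqrt 2) * (Rabs X * Rabs Y * (Rabs V * h))) by ring.
    rewrite Hsq2. ring. }
  assert (Hbound : 2 * c * sqrt 2 * Rabs X * (2 * Rabs Y) * (sqrt 2 * (Rabs V * h))
                   <= 2 * c * sqrt 2 * sqrt xi0 * S * (b * l)).
  { pose proof (Rabs_pos X). pose proof (Rabs_pos Y). pose proof (Rabs_pos V).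
    assert (0 <= 2 * c * sqrt 2) by (repeat apply Rmult_le_pos; lra).
    apply Rmult_le_compat;
      [repeat apply Rmult_le_pos; lra | apply Rmult_le_pos; [lra | nra] | | exact HV].
    apply Rmult_le_compat; [apply Rmult_le_pos; lra | lra | | exact HY].
    apply Rmult_le_compat_l; [lra | exact HX]. }
  rewrite Hrate, Hsqrt.
  assert (0 <= h) by lra.
  nra.
Qed.

Lemma Rge_ratio_of_le_mul A B C D T :
  0 < A -> 0 < B -> 0 < C -> D <= A * B * C * T -> T >= 1 / A * (1 / B) * (D / C).
Proof.
  intros HA HB HC HD. apply Rle_ge.
  replace (1 / A * (1 / B) * (D / C)) with (D / (A * B * C)) by (field; lra).
  apply (Rmult_le_reg_r (A * B * C)); [now repeat apply Rmult_lt_0_compat |].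
  unfold Rdiv. rewrite Rmult_assoc, Rinv_l; [lra |].
  apply Rgt_not_eq. now repeat apply Rmult_lt_0_compat.
Qed.

Theorem mainTheorem4
  (c l w sigma : R) (I : R -> Prop)
  (x yr yi z h dx dyr dyi dz dh : R -> R)
  (tb t0 xi0 b : R)
  (Hc : 0 < c) (Hl : 0 < l) (Hw : -1 <= w <= 1)
  (Hsigma : sigma < 0)
  (HI : is_interval I)
  (Hx1 : C1_on I x dx) (Hyr1 : C1_on I yr dyr) (Hyi1 : C1_on I yi dyi)
  (Hz1 : C1_on I z dz) (Hh1 : C1_on I h dh)
  (Hhpos : forall t, I t -> 0 < h t)
  (Hznn : forall t, I t -> 0 <= z t)
  (Hdx : forall t, I t -> dx t =
     (- x t + 4 * c * yr t * yi t
        + x t * (x t ^ 2 + (1 + w) / 2 * z t ^ 2)) * h t)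
  (Hdyr : forall t, I t -> dyr t =
     ((x t ^ 2 + (1 + w) / 2 * z t ^ 2) * yr t - c * x t * yi t) * h t)
  (Hdyi : forall t, I t -> dyi t =
     ((x t ^ 2 + (1 + w) / 2 * z t ^ 2) * yi t + c * x t * yr t) * h t)
  (Hdz : forall t, I t -> dz t =
     (- ((1 + w) / 2) + (x t ^ 2 + (1 + w) / 2 * z t ^ 2)) * z t * h t)
  (Hdh : forall t, I t -> dh t =
     - (x t ^ 2 + (1 + w) / 2 * z t ^ 2) * h t ^ 2)
  (Hcon1 : forall t, I t ->
     x t ^ 2 + 4 * yr t ^ 2 + z t ^ 2 = 1 - sigma / h t ^ 2)
  (Hcon2 : forall t, I t ->
     yr t ^ 2 + yi t ^ 2 = l ^ 2 / (2 * h t ^ 2))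
  (Htb : I tb)
  (Hxi0pos : 0 < xi0)
  (Hxib : x tb ^ 2 + (1 + w) / 2 * z tb ^ 2 <= xi0)
  (Hxi0w : xi0 <= (1 + w) / 2)
  (Ht0 : I t0) (Ht0b : tb <= t0)
  (Hxit0 : x t0 ^ 2 + (1 + w) / 2 * z t0 ^ 2 = xi0)
  (Ht0min : forall t, I t -> tb <= t ->
     x t ^ 2 + (1 + w) / 2 * z t ^ 2 = xi0 -> t0 <= t)
  (Hb_ub : forall t, tb <= t <= t0 -> sqrt 2 * Rabs (yi t) * h t / l <= b)
  (Hb_att : exists t, tb <= t <= t0 /\ b = sqrt 2 * Rabs (yi t) * h t / l)
  (Hbpos : 0 < b) :
  t0 - tb >=
    1 / (2 * sqrt (2 * xi0)) * (1 / (b * c * l))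
    * ((xi0 - (x tb ^ 2 + (1 + w) / 2 * z tb ^ 2))
       / sqrt (1 + Rabs sigma / h t0 ^ 2)).
Proof.
  set (k := (1 + w) / 2).
  assert (Hk : 0 <= k <= 1) by (unfold k; lra).
  destruct Hx1 as [Hxd _], Hz1 as [Hzd _], Hh1 as [Hhd _].
  assert (HIb : forall t, tb <= t <= t0 -> I t) by (intros t; apply (HI tb t0); auto).
  set (xi := fun t => x t ^ 2 + k * z t ^ 2).
  set (dxi := fun t => 2 * x t * dx t + k * (2 * z t * dz t)).
  assert (Hxid : has_deriv_on I xi dxi)
    by (apply has_deriv_on_plus; [| apply has_deriv_on_scal]; now apply has_deriv_on_sqr).
  assert (Hbelow : forall t, tb <= t <= t0 -> xi t <= xi0)
    by exact (le_before_first_hit I xi tb t0 xi0 HI Htb Ht0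
                (has_deriv_on_continuous_on_I _ _ _ Hxid) Hxib Ht0min).
  assert (Hh_decr : forall t, tb <= t <= t0 -> h t0 <= h t).
  { intros t Ht. apply (deriv_nonpos_le I t t0 HI (HIb t Ht) Ht0 (proj2 Ht) h dh Hhd).
    intros s Hs. rewrite Hdh by (apply HIb; lra). fold k.
    pose proof (sq_plus_scal_sq_ge0 k (x s) (z s) (proj1 Hk)). pose proof (pow2_ge_0 (h s)).
    enough (0 <= (x s ^ 2 + k * z s ^ 2) * h s ^ 2) by lra.
    now apply Rmult_le_pos. }
  set (S := sqrt (1 + Rabs sigma / h t0 ^ 2)).
  assert (Hrate : forall t, tb <= t <= t0 -> dxi t <= 2 * sqrt (2 * xi0) * (b * c * l) * S).
  { intros t Ht. unfold dxi, S. rewrite Hdx, Hdz by (now apply HIb). fold k.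
    apply shifted_xi_rate_le; auto. exact (Hbelow t Ht). }
  assert (Hgrowth := mean_value_le I tb t0 HI Htb Ht0 Ht0b xi dxi _ Hxid Hrate).
  replace (xi t0) with xi0 in Hgrowth by (symmetry; exact Hxit0).
  apply Rge_ratio_of_le_mul.
  - apply Rmult_lt_0_compat; [lra | apply sqrt_lt_R0; lra].
  - now repeat apply Rmult_lt_0_compat.
  - apply sqrt_lt_R0. pose proof (Hhpos t0 Ht0).
    enough (0 <= Rabs sigma / h t0 ^ 2) by lra.
    apply Rdiv_le_0_compat; [apply Rabs_pos | apply pow_lt; lra].
  - fold k S. change (x tb ^ 2 + k * z tb ^ 2) with (xi tb). lra.
Qed.
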